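(* Let $d\ge2$ and let $\mathcal{T}_d$ be the channel on a $d$-dimensional system given by $\mathcal{T}_d(\rho)=\mathrm{Tr}(\rho)|0\rangle\langle0|$. Then for $1/d^2\le t\le 1$, $$\mathcal{O}_t(\mathcal{T}_d)=\begin{cases}\frac1d & \text{if } \frac1d\le t\le1,\\ \frac{1}{d^2}\Big(1+\sqrt{(td^2-1)(d-1)}\Big) & \text{if } \frac1{d^2}\le t\le\frac1d.\end{cases}$$ An optimizer is $|0\rangle\langle0|_r\otimes\rho_a$ for any density operator $\rho_a$ with $\mathrm{Tr}(\rho_a^2)\le t$ when $1/d\le t\le1$, and $(1-k)\frac{I_{ra}}{d^2}+k\,|0\rangle\langle0|_r\otimes\frac{I_a}{d}$ with $k=\sqrt{\frac{td^2-1}{d-1}}$ when $1/d^2\le t\le 1/d$.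
   Context: For a channel $\mathcal{N}:\mathcal{L}(\mathcal{H}_a)\to\mathcal{L}(\mathcal{H}_b)$ with $\dim\mathcal{H}_a=\dim\mathcal{H}_b=\dim\mathcal{H}_r=d$, define $\mathcal{O}_t(\mathcal{N})=\max\{\langle\phi_{rb}|(\mathrm{id}_r\otimes\mathcal{N})(\rho_{ra})|\phi_{rb}\rangle:\ \rho_{ra}\succeq0,\ \mathrm{Tr}\rho_{ra}=1,\ \mathrm{Tr}(\rho_{ra}^2)\le t\}$, where $|\phi_{rb}\rangle=\frac{1}{\sqrt d}\sum_i|\alpha_i\rangle_r\otimes|\alpha_i\rangle_b$ is maximally entangled for an orthonormal basis $\{|\alpha_i\rangle\}$ with $|0\rangle$ one of its elements. *)

(* Complex scalars: an arbitrary numClosedFieldType C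
   (e.g. the complex numbers R[i] for R : realType, or algC). *)
From HB Require Import structures.
From mathcomp Require Import all_boot all_order all_algebra.
From mathcomp Require Import mxtens.
Set Implicit Arguments.
Unset Strict Implicit.
Unset Printing Implicit Defensive.
Import Order.TTheory GRing.Theory Num.Theory Num.Def.
Local Open Scope ring_scope.

Section QDefs.
Variable C : numClosedFieldType.

Definition dagger m n (A : 'M[C]_(m, n)) : 'M[C]_(n, m) := (map_mx Num.conj A)^T.

Definition psdmx n (A : 'M[C]_n) : Prop :=
  dagger A = A /\ forall v : 'cV[C]_n, 0 <= (dagger v *m A *m v) 0 0.

Definition density n (rho : 'M[C]_n) : Prop := psdmx rho /\ \tr rho = 1.

(* (id_r (x) N) acting on an operator on H_r (x) H_a, where the composite
   index of (i_r, i_a) is mxtens_index (i_r, i_a) (same convention as *t):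
   the (i,j) block rho_ij is mapped to N rho_ij. *)
Definition id_tens d (N : 'M[C]_d -> 'M[C]_d) (rho : 'M[C]_(d * d)) :
  'M[C]_(d * d) :=
  \matrix_(k, l)
    (N (\matrix_(a, b) rho (mxtens_index ((mxtens_unindex k).1, a))
                           (mxtens_index ((mxtens_unindex l).1, b))))
      (mxtens_unindex k).2 (mxtens_unindex l).2.

(* the maximally entangled vector built from the orthonormal basis given by
   the rows of a unitary matrix U: phi = 1/sqrt d sum_i alpha_i (x) alpha_i *)
Definition max_ent d (U : 'M[C]_d) : 'cV[C]_(d * d) :=
  (sqrtC (d%:R : C))^-1 *:
    \col_k (\sum_(i < d) U i (mxtens_unindex k).1 * U i (mxtens_unindex k).2).

Definition fidelity_obj d (N : 'M[C]_d -> 'M[C]_d) (U : 'M[C]_d)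
  (rho : 'M[C]_(d * d)) : C :=
  (dagger (max_ent U) *m id_tens N rho *m max_ent U) 0 0.

Definition feasible d (t : C) (rho : 'M[C]_(d * d)) : Prop :=
  density rho /\ \tr (rho *m rho) <= t.

Definition is_Ot d (N : 'M[C]_d -> 'M[C]_d) (U : 'M[C]_d) (t v : C) : Prop :=
  (exists rho, feasible t rho /\ fidelity_obj N U rho = v) /\
  (forall rho, feasible t rho -> fidelity_obj N U rho <= v).

Definition trace_replace d (i0 : 'I_d) (X : 'M[C]_d) : 'M[C]_d :=
  \tr X *: delta_mx i0 i0.

(* orthonormal basis {alpha_i} = rows of U, containing |0> = e_i0 *)
Definition onb_with d (U : 'M[C]_d) (i0 : 'I_d) : Prop :=
  U *m dagger U = 1%:M /\ exists j : 'I_d, row j U = delta_mx 0 i0.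

End QDefs.

From HB Require Import structures.
From mathcomp Require Import all_boot all_order all_algebra.
From mathcomp Require Import mxtens ring.
Set Implicit Arguments.
Import Order.TTheory GRing.Theory Num.Theory Num.Def.
Local Open Scope ring_scope.

(* (id (x) T_d)(rho) = rho_r (x) |0><0| with rho_r = Tr_a rho, and since |0> is
   one of the basis vectors, (I (x) <0|) phi = |0> / sqrt d.  So the objective is
   p/d with p = <0|rho_r|0> <= 1, attained by |0><0| (x) rho_a.
   The d diagonal entries of rho in the |0>-block carry total weight p and the
   other d(d-1) carry 1 - p, so by Cauchy-Schwarz
   Tr rho^2 >= p^2/d + (1-p)^2/(d(d-1)), i.e. (dp - 1)^2 <= (d-1)(d^2 Tr rho^2 - 1),
   which bounds p once Tr rho^2 <= t.  Mixing I/d^2 with |0><0| (x) I/d keeps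
   the diagonal constant on each of the two groups, so Cauchy-Schwarz is tight,
   and the mixing weight k is chosen to make the purity constraint tight. *)

Lemma sumr_mxtens (R : nmodType) m n (F : 'I_(m * n) -> R) :
  \sum_k F k = \sum_(a < m) \sum_(b < n) F (mxtens_index (a, b)).
Proof.
rewrite pair_big /= (reindex (@mxtens_index m n)) /=; last first.
  by exists (@mxtens_unindex m n) => k _; rewrite (mxtens_indexK, mxtens_unindexK).
by apply: eq_bigr => -[a b].
Qed.

Lemma sumr_single {R : nmodType} {I : finType} (i0 : I) (F : I -> R) :
  (forall i, i != i0 -> F i = 0) -> \sum_i F i = F i0.
Proof. by move=> F0; rewrite (bigD1 i0) //= big1 ?addr0 // => i /F0. Qed.

Lemma sqr_sum_le {R : numDomainType} {I : finType} (P : pred I) (x : I -> R) :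
  {in P, forall i, x i \is Num.real} ->
  (\sum_(i in P) x i) ^+ 2 <= #|P|%:R * \sum_(i in P) x i ^+ 2.
Proof.
move=> xR; set S := \sum_(i in P) x i; set Q := \sum_(i in P) x i ^+ 2.
have spread_ge0 : 0 <= \sum_(i in P) \sum_(j in P) (x i - x j) ^+ 2.
  by do 2!apply: sumr_ge0 => ? ?; rewrite -realEsqr realB ?xR.
suff spreadE : \sum_(i in P) \sum_(j in P) (x i - x j) ^+ 2 =
               2%:R * (#|P|%:R * Q - S ^+ 2).
  by rewrite spreadE pmulr_rge0 ?ltr0n // subr_ge0 in spread_ge0.
transitivity (\sum_(i in P) (x i ^+ 2 * #|P|%:R + Q - 2%:R * x i * S)).
  apply: eq_bigr => i _; rewrite /Q /S mulr_natr -sumr_const.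
  rewrite !mulr_sumr -!big_split -sumrB; apply: eq_bigr => j _ /=.
  by move: (x i) (x j) => a b; ring.
rewrite sumrB big_split /= -!mulr_suml -/S -/Q sumr_const -mulr_sumr -/S.
by rewrite -[Q *+ _]mulr_natr; ring.
Qed.

Lemma ler_sqrtC_sqr (C : numClosedFieldType) (x y : C) :
  x \is Num.real -> x ^+ 2 <= y -> x <= sqrtC y.
Proof.
move=> xR x2_le; apply: le_trans (real_ler_norm xR) _.
have y_ge0 : 0 <= y by apply: le_trans x2_le; rewrite -realEsqr.
by rewrite -(sqrCK (normr_ge0 x)) ler_sqrtC ?nnegrE ?exprn_ge0 ?real_normK.
Qed.

Lemma mxtrace_delta (R : pzSemiRingType) n (i : 'I_n) : \tr (delta_mx i i : 'M[R]_n) = 1.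
Proof.
rewrite /mxtrace (sumr_single i) => [|j ji]; first by rewrite mxE eqxx.
by rewrite mxE (negbTE ji).
Qed.

Lemma tensmxZr (R : comPzRingType) m n p q c (A : 'M[R]_(m, n)) (B : 'M[R]_(p, q)) :
  A *t (c *: B) = c *: (A *t B).
Proof. by apply/matrixP => i j; rewrite !mxE mulrCA. Qed.

Definition ptrace_a {R : nmodType} {m n} (rho : 'M[R]_(m * n)) : 'M[R]_m :=
  \matrix_(a, a') \sum_b rho (mxtens_index (a, b)) (mxtens_index (a', b)).

Lemma mxtrace_ptrace_a (R : nmodType) m n (rho : 'M[R]_(m * n)) :
  \tr (ptrace_a rho) = \tr rho.
Proof. by rewrite [RHS]/mxtrace sumr_mxtens; apply: eq_bigr => a _; rewrite mxE. Qed.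

Lemma ptrace_a_tens (R : comPzRingType) m n (A : 'M[R]_m) (B : 'M[R]_n) :
  ptrace_a (A *t B) = \tr B *: A.
Proof.
apply/matrixP => a a'; rewrite !mxE mulr_suml.
by apply: eq_bigr => b _; rewrite tensmxE mulrC.
Qed.

Lemma mxtrace_tens (R : comPzRingType) m n (A : 'M[R]_m) (B : 'M[R]_n) :
  \tr (A *t B) = \tr A * \tr B.
Proof. by rewrite -mxtrace_ptrace_a ptrace_a_tens mxtraceZ mulrC. Qed.

Section Psd.
Variable C : numClosedFieldType.
Local Notation qform A v := ((dagger v *m A *m v) 0 0).

Lemma daggerE m n (A : 'M[C]_(m, n)) i j : dagger A i j = (A j i)^*.
Proof. by rewrite !mxE. Qed.

Lemma daggerD m n (A B : 'M[C]_(m, n)) : dagger (A + B) = dagger A + dagger B.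
Proof. by apply/matrixP => i j; rewrite !daggerE !mxE rmorphD. Qed.

Lemma daggerZ m n c (A : 'M[C]_(m, n)) : dagger (c *: A) = c^* *: dagger A.
Proof. by apply/matrixP => i j; rewrite !daggerE !mxE rmorphM. Qed.

Lemma dagger_tens m n p q (A : 'M[C]_(m, n)) (B : 'M[C]_(p, q)) :
  dagger (A *t B) = dagger A *t dagger B.
Proof. by rewrite /dagger map_mxT trmx_tens. Qed.

Lemma dagger_delta m n (i : 'I_m) (j : 'I_n) :
  dagger (delta_mx i j : 'M[C]_(m, n)) = delta_mx j i.
Proof. by apply/matrixP => k l; rewrite daggerE !mxE conjC_nat andbC. Qed.

Lemma qformE n (A : 'M[C]_n) (v : 'cV[C]_n) :
  qform A v = \sum_k \sum_l (v k 0)^* * A k l * v l 0.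
Proof.
rewrite mxE exchange_big; apply: eq_bigr => l _.
by rewrite mxE mulr_suml; apply: eq_bigr => k _; rewrite daggerE.
Qed.

Lemma qform_delta n (A : 'M[C]_n) k : qform A (delta_mx k 0 : 'cV_n) = A k k.
Proof. by rewrite dagger_delta -rowE -colE !mxE. Qed.

Lemma qform_scale n (A : 'M[C]_n) c (v : 'cV[C]_n) : qform A (c *: v) = c^* * c * qform A v.
Proof. by rewrite daggerZ -scalemxAl -scalemxAr -scalemxAl !mxE mulrA [c * _]mulrC. Qed.

Lemma psdmx_herm n (A : 'M[C]_n) i j : psdmx A -> A j i = (A i j)^*.
Proof. by case=> AH _; rewrite -{1}AH daggerE. Qed.

Lemma psdmx_diag_ge0 n (A : 'M[C]_n) k : psdmx A -> 0 <= A k k.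
Proof. by case=> _ /(_ (delta_mx k 0)); rewrite qform_delta. Qed.

Lemma psdmxD n (A B : 'M[C]_n) : psdmx A -> psdmx B -> psdmx (A + B).
Proof.
move=> [AH A_ge0] [BH B_ge0]; split; first by rewrite daggerD AH BH.
by move=> v; rewrite mulmxDr mulmxDl mxE addr_ge0.
Qed.

Lemma psdmxZ n c (A : 'M[C]_n) : 0 <= c -> psdmx A -> psdmx (c *: A).
Proof.
move=> c_ge0 [AH A_ge0]; split; first by rewrite daggerZ geC0_conj // AH.
by move=> v; rewrite -scalemxAr -scalemxAl mxE mulr_ge0.
Qed.

Lemma psdmx1 n : psdmx (1%:M : 'M[C]_n).
Proof.
split; first by apply/matrixP => i j; rewrite daggerE !mxE conjC_nat eq_sym.
move=> v; rewrite qformE; apply: sumr_ge0 => k _.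
rewrite (sumr_single k) => [|l lk]; last by rewrite !mxE eq_sym (negbTE lk) mulr0 mul0r.
by rewrite mxE eqxx mulr1 mulrC mul_conjC_ge0.
Qed.

Lemma qform_delta_tens m n (i : 'I_m) (B : 'M[C]_n) (v : 'cV[C]_(m * n)) :
  qform (delta_mx i i *t B) v = qform B (\col_b v (mxtens_index (i, b)) 0).
Proof.
rewrite !qformE sumr_mxtens (sumr_single i) => [|a ai]; last first.
  apply: big1 => b _; apply: big1 => l _; case: (mxtens_indexP l) => a' b'.
  by rewrite tensmxE mxE (negbTE ai) /= !(mul0r, mulr0).
apply: eq_bigr => b _; rewrite sumr_mxtens (sumr_single i) => [|a' a'i]; last first.
  by apply: big1 => b' _; rewrite tensmxE mxE (negbTE a'i) andbF !(mul0r, mulr0).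
by apply: eq_bigr => b' _; rewrite tensmxE !mxE !eqxx mul1r.
Qed.

Lemma qform_tens_delta m n (A : 'M[C]_m) (j : 'I_n) (v : 'cV[C]_(m * n)) :
  qform (A *t delta_mx j j) v = qform A (\col_a v (mxtens_index (a, j)) 0).
Proof.
rewrite !qformE sumr_mxtens; apply: eq_bigr => a _.
rewrite (sumr_single j) => [|b bj]; last first.
  apply: big1 => l _; case: (mxtens_indexP l) => a' b'.
  by rewrite tensmxE mxE (negbTE bj) /= !(mul0r, mulr0).
rewrite sumr_mxtens; apply: eq_bigr => a' _.
rewrite (sumr_single j) => [|b' b'j]; last first.
  by rewrite tensmxE mxE (negbTE b'j) andbF !(mul0r, mulr0).
by rewrite tensmxE !mxE !eqxx mulr1.
Qed.

Lemma psdmx_delta_tens m n (i : 'I_m) (B : 'M[C]_n) :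
  psdmx B -> psdmx (delta_mx i i *t B).
Proof.
move=> [BH B_ge0]; split; first by rewrite dagger_tens dagger_delta BH.
by move=> v; rewrite qform_delta_tens.
Qed.

Lemma sum_sqr_diag_le_trace n (A : 'M[C]_n) :
  psdmx A -> \sum_k A k k ^+ 2 <= \tr (A *m A).
Proof.
move=> A_psd; apply: ler_sum => k _; rewrite mxE (bigD1 k) //= -expr2 lerDl.
by apply: sumr_ge0 => l _; rewrite (psdmx_herm k l A_psd) mul_conjC_ge0.
Qed.

Lemma ptrace_a_diag_ge0 m n (rho : 'M[C]_(m * n)) a :
  psdmx rho -> 0 <= ptrace_a rho a a.
Proof. by move=> rho_psd; rewrite mxE; apply: sumr_ge0 => b _; apply: psdmx_diag_ge0. Qed.

Lemma ptrace_a_diag_le1 m n (rho : 'M[C]_(m * n)) a :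
  density rho -> ptrace_a rho a a <= 1.
Proof.
case=> rho_psd <-; rewrite -mxtrace_ptrace_a /mxtrace (bigD1 a) //= lerDl.
by apply: sumr_ge0 => a' _; apply: ptrace_a_diag_ge0.
Qed.
End Psd.

Section TraceReplace.
Variable C : numClosedFieldType.

Lemma id_tens_trace_replace d (i0 : 'I_d) (rho : 'M[C]_(d * d)) :
  id_tens (trace_replace i0) rho = ptrace_a rho *t delta_mx i0 i0.
Proof.
apply/matrixP => k l; case: (mxtens_indexP k) => a b; case: (mxtens_indexP l) => a' b'.
rewrite tensmxE !mxE !mxtens_indexK /=; congr (_ * _).
by apply: eq_bigr => c _; rewrite mxE.
Qed.

Lemma onb_with_col d (U : 'M[C]_d) i0 : onb_with U i0 ->
  exists j, (forall i, U i i0 = (i == j)%:R) /\ (forall k, U j k = (k == i0)%:R).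
Proof.
case=> UU [j Uj].
have Uj_row k : U j k = (k == i0)%:R.
  by have := congr1 (fun r : 'rV[C]_d => r 0 k) Uj; rewrite !mxE.
exists j; split => // i.
have := congr1 (fun M : 'M[C]_d => M j i) UU.
rewrite !mxE (sumr_single i0) => [|k ki0]; last by rewrite Uj_row (negbTE ki0) mul0r.
by rewrite Uj_row eqxx mul1r daggerE => /(congr1 conjC); rewrite conjCK conjC_nat eq_sym.
Qed.

Lemma max_ent_slice d (U : 'M[C]_d) i0 : onb_with U i0 ->
  \col_a max_ent U (mxtens_index (a, i0)) 0 = (sqrtC d%:R)^-1 *: delta_mx i0 0.
Proof.
move=> /onb_with_col[j [Ucol Urow]]; apply/matrixP => a z.
rewrite !mxE mxtens_indexK /= [z]ord1 (sumr_single j) => [|i ij]; last first.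
  by rewrite Ucol (negbTE ij) mulr0.
by rewrite Ucol eqxx mulr1 Urow andbT.
Qed.

Lemma fidelity_obj_trace_replace d (U : 'M[C]_d) i0 (rho : 'M[C]_(d * d)) :
  onb_with U i0 ->
  fidelity_obj (trace_replace i0) U rho = (d%:R)^-1 * ptrace_a rho i0 i0.
Proof.
move=> hU; rewrite /fidelity_obj id_tens_trace_replace qform_tens_delta.
rewrite max_ent_slice // qform_scale qform_delta; congr (_ * _).
by rewrite geC0_conj ?invr_ge0 ?sqrtC_ge0 ?ler0n // -expr2 exprVn sqrtCK.
Qed.
End TraceReplace.

Section TraceReplaceOptimum.
Variables (C : numClosedFieldType) (d : nat) (i0 : 'I_d) (U : 'M[C]_d).
Hypothesis hU : onb_with U i0.
Local Notation T := (trace_replace i0).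

Let d_gt0 : (0 < d)%N. Proof. exact: leq_ltn_trans (ltn_ord i0). Qed.
Let d_neq0 : d%:R != 0 :> C. Proof. by rewrite pnatr_eq0 -lt0n d_gt0. Qed.

Lemma fidelity_trace_replace_le_inv t rho :
  feasible t rho -> fidelity_obj T U rho <= (d%:R)^-1.
Proof.
case=> rho_den _; rewrite fidelity_obj_trace_replace //.
by rewrite ler_piMr ?invr_ge0 ?ler0n ?ptrace_a_diag_le1.
Qed.

Lemma purity_ptrace_a_bound (rho : 'M[C]_(d * d)) : density rho ->
  (d%:R * ptrace_a rho i0 i0 - 1) ^+ 2 <= (\tr (rho *m rho) * d%:R ^+ 2 - 1) * (d%:R - 1).
Proof.
move=> [rho_psd rho_tr].
pose x a b := rho (mxtens_index (a, b)) (mxtens_index (a, b)).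
have xR a b : x a b \is Num.real by rewrite ger0_real ?psdmx_diag_ge0.
set p := ptrace_a rho i0 i0; have pE : p = \sum_b x i0 b by rewrite /p mxE.
set q := \sum_(a in predC1 i0) \sum_b x a b.
have qE : q = 1 - p.
  by rewrite -rho_tr /mxtrace sumr_mxtens (bigD1 i0) //= pE addrAC subrr add0r.
set A := \sum_b x i0 b ^+ 2; set B := \sum_(a in predC1 i0) \sum_b x a b ^+ 2.
have AB_le : A + B <= \tr (rho *m rho).
  by apply: le_trans (sum_sqr_diag_le_trace rho_psd); rewrite sumr_mxtens (bigD1 i0).
have sqr_block_le a : (\sum_b x a b) ^+ 2 <= d%:R * \sum_b x a b ^+ 2.
  by have := sqr_sum_le (P := predT) (x a) (fun b _ => xR a b); rewrite card_ord.
have q2_le : q ^+ 2 <= (d%:R - 1) * (d%:R * B).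
  have blockR a : \sum_b x a b \is Num.real by apply: sum_real => b _.
  apply: le_trans (sqr_sum_le (P := predC1 i0) _ (fun a _ => blockR a)) _.
  rewrite cardC1 card_ord -subn1 natrB // ler_wpM2l ?subr_ge0 ?ler1n // mulr_sumr.
  by apply: ler_sum => a _; apply: sqr_block_le.
rewrite -subr_ge0.
have -> : (\tr (rho *m rho) * d%:R ^+ 2 - 1) * (d%:R - 1) - (d%:R * p - 1) ^+ 2 =
    d%:R ^+ 2 * (d%:R - 1) * (\tr (rho *m rho) - (A + B)) +
    d%:R * (d%:R - 1) * (d%:R * A - p ^+ 2) + d%:R * ((d%:R - 1) * (d%:R * B) - q ^+ 2).
  by rewrite qE; ring.
by rewrite !addr_ge0 // !mulr_ge0 ?subr_ge0 ?exprn_ge0 ?ler0n ?ler1n // pE sqr_block_le.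
Qed.

Lemma fidelity_trace_replace_le_sqrt t rho : feasible t rho ->
  fidelity_obj T U rho <= (d%:R ^+ 2)^-1 * (1 + sqrtC ((t * d%:R ^+ 2 - 1) * (d%:R - 1))).
Proof.
case=> rho_den purity_le; rewrite fidelity_obj_trace_replace //.
have rho_psd : psdmx rho by case: rho_den.
set p := ptrace_a rho i0 i0.
have key : (d%:R * p - 1) ^+ 2 <= (t * d%:R ^+ 2 - 1) * (d%:R - 1).
  apply: le_trans (purity_ptrace_a_bound rho_den) _.
  by rewrite ler_wpM2r ?subr_ge0 ?ler1n // lerB // ler_wpM2r ?exprn_ge0 ?ler0n.
have -> : (d%:R)^-1 * p = (d%:R ^+ 2)^-1 * (1 + (d%:R * p - 1)) by field.
rewrite ler_wpM2l ?invr_ge0 ?exprn_ge0 ?ler0n // lerD2l ler_sqrtC_sqr //.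
by rewrite realB ?realM ?ger0_real ?ler0n ?ptrace_a_diag_ge0.
Qed.

Lemma maximally_mixed_density :
  density ((d%:R)^-1 *: 1%:M : 'M[C]_d) /\
  \tr (((d%:R)^-1 *: 1%:M) *m ((d%:R)^-1 *: 1%:M) : 'M[C]_d) = (d%:R)^-1.
Proof.
split; first split.
- by apply: psdmxZ (psdmx1 _ _); rewrite invr_ge0 ler0n.
- by rewrite mxtraceZ mxtrace1 mulVf.
by rewrite -scalemxAl mul1mx scalerA mxtraceZ mxtrace1 mulfVK.
Qed.

Lemma feasible_delta_tens t (R : 'M[C]_d) :
  density R -> \tr (R *m R) <= t -> feasible t (delta_mx i0 i0 *t R).
Proof.
move=> [R_psd R_tr] R_pur; split; first split.
- exact: psdmx_delta_tens.
- by rewrite mxtrace_tens mxtrace_delta mul1r.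
by rewrite tensmx_mul mul_delta_mx mxtrace_tens mxtrace_delta mul1r.
Qed.

Lemma fidelity_obj_delta_tens (R : 'M[C]_d) :
  density R -> fidelity_obj T U (delta_mx i0 i0 *t R) = (d%:R)^-1.
Proof.
case=> _ R_tr; rewrite fidelity_obj_trace_replace // ptrace_a_tens R_tr scale1r.
by rewrite mxE !eqxx mulr1.
Qed.

Definition mix_state (k : C) : 'M[C]_(d * d) :=
  (1 - k) *: ((d%:R ^+ 2)^-1 *: 1%:M) + k *: (delta_mx i0 i0 *t ((d%:R)^-1 *: 1%:M)).

Lemma mix_stateE k : mix_state k =
  ((1 - k) / d%:R ^+ 2) *: 1%:M + (k / d%:R) *: (delta_mx i0 i0 *t 1%:M).
Proof. by rewrite /mix_state tensmxZr !scalerA. Qed.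

Lemma density_mix_state k : 0 <= k <= 1 -> density (mix_state k).
Proof.
case/andP=> k_ge0 k_le1; rewrite mix_stateE; split.
  apply: psdmxD; apply: psdmxZ.
  - by rewrite divr_ge0 ?subr_ge0 ?exprn_ge0 ?ler0n.
  - exact: psdmx1.
  - by rewrite divr_ge0 ?ler0n.
  - exact/psdmx_delta_tens/psdmx1.
rewrite mxtraceD !mxtraceZ mxtrace_tens mxtrace_delta !mxtrace1 natrM.
by field.
Qed.

Lemma purity_mix_state k :
  \tr (mix_state k *m mix_state k) = (1 + k ^+ 2 * (d%:R - 1)) / d%:R ^+ 2.
Proof.
set P := delta_mx i0 i0 *t (1%:M : 'M[C]_d).
have PP : P *m P = P by rewrite tensmx_mul mul_delta_mx mul1mx.
rewrite mix_stateE mulmxDl !mulmxDr -!scalemxAl -!scalemxAr !mul1mx !mulmx1 PP.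
rewrite !mxtraceD !mxtraceZ mxtrace_tens mxtrace_delta !mxtrace1 natrM.
by field.
Qed.

Lemma fidelity_obj_mix_state k :
  fidelity_obj T U (mix_state k) = (1 + k * (d%:R - 1)) / d%:R ^+ 2.
Proof.
rewrite fidelity_obj_trace_replace // mix_stateE mxE.
under eq_bigr => b _ do rewrite !mxE !mxtens_indexK !eqxx /= !mulr1.
rewrite sumr_const card_ord -mulr_natl.
by field.
Qed.

Lemma mix_state_optimal t : (2 <= d)%N -> (d%:R ^+ 2)^-1 <= t -> t <= (d%:R)^-1 ->
  let k := sqrtC ((t * d%:R ^+ 2 - 1) / (d%:R - 1)) in
  feasible t (mix_state k) /\
  fidelity_obj T U (mix_state k) =
    (d%:R ^+ 2)^-1 * (1 + sqrtC ((t * d%:R ^+ 2 - 1) * (d%:R - 1))).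
Proof.
move=> d_ge2 t_ge t_le k; set X := (t * d%:R ^+ 2 - 1) / (d%:R - 1).
have d1_gt0 : (0 : C) < d%:R - 1 by rewrite subr_gt0 ltr1n.
have d2_gt0 : (0 : C) < d%:R ^+ 2 by rewrite exprn_gt0 // ltr0n.
have d1_neq0 : d%:R - 1 != 0 :> C by rewrite gt_eqF.
have X_ge0 : 0 <= X.
  apply: divr_ge0; last exact: ltW.
  by rewrite subr_ge0 -ler_pdivrMr // div1r.
have X_le1 : X <= 1.
  rewrite ler_pdivrMr // mul1r lerBlDr subrK.
  apply: le_trans (ler_wpM2r (ltW d2_gt0) t_le) _.
  by rewrite expr2 mulrA mulVf // mul1r.
have k_ge0 : 0 <= k by rewrite sqrtC_ge0.
have k_le1 : k <= 1 by rewrite -sqrtC1 ler_sqrtC ?nnegrE.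
have kX : k ^+ 2 = X by rewrite sqrtCK.
split; first split.
- by apply: density_mix_state; rewrite k_ge0 k_le1.
- by rewrite purity_mix_state kX /X divfK // addrC subrK mulfK ?gt_eqF.
rewrite fidelity_obj_mix_state mulrC.
have -> : (t * d%:R ^+ 2 - 1) * (d%:R - 1) = X * (d%:R - 1) ^+ 2.
  by rewrite /X; field.
by rewrite sqrtCM ?nnegrE ?exprn_ge0 ?(ltW d1_gt0) // sqrCK ?(ltW d1_gt0).
Qed.
End TraceReplaceOptimum.

Theorem mainTheorem6 (C : numClosedFieldType) (d : nat) (hd : (2 <= d)%N)
  (i0 : 'I_d) (hi0 : nat_of_ord i0 = 0%N) (U : 'M[C]_d) (hU : onb_with U i0)
  (t : C) (ht1 : (d%:R ^+ 2)^-1 <= t) (ht2 : t <= 1) :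
  let T := trace_replace i0 in
  ((d%:R)^-1 <= t ->
     is_Ot T U t (d%:R)^-1 /\
     (forall rho_a : 'M[C]_d, density rho_a -> \tr (rho_a *m rho_a) <= t ->
        feasible t (delta_mx i0 i0 *t rho_a) /\
        fidelity_obj T U (delta_mx i0 i0 *t rho_a) = (d%:R)^-1)) /\
  (t <= (d%:R)^-1 ->
     let v := (d%:R ^+ 2)^-1 *
              (1 + sqrtC ((t * d%:R ^+ 2 - 1) * (d%:R - 1))) in
     let k := sqrtC ((t * d%:R ^+ 2 - 1) / (d%:R - 1)) in
     let rho := (1 - k) *: ((d%:R ^+ 2)^-1 *: (1%:M : 'M[C]_(d * d)))
                + k *: (delta_mx i0 i0 *t ((d%:R)^-1 *: (1%:M : 'M[C]_d))) in
     is_Ot T U t v /\ feasible t rho /\ fidelity_obj T U rho = v).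
Proof.
move=> T; split => [t_ge | t_le v k rho].
- have [mixed_den mixed_pur] := maximally_mixed_density C i0.
  split; first split.
  + exists (delta_mx i0 i0 *t ((d%:R)^-1 *: 1%:M)); split.
      by apply: feasible_delta_tens; rewrite ?mixed_pur.
    exact: fidelity_obj_delta_tens.
  + by move=> rho; apply: fidelity_trace_replace_le_inv.
  + move=> R R_den R_pur.
    by split; [apply: feasible_delta_tens | apply: fidelity_obj_delta_tens].
have [rho_feas rho_obj] := mix_state_optimal hU t hd ht1 t_le.
split; last by split.
split; first by exists rho.
by move=> r; apply: fidelity_trace_replace_le_sqrt.
Qed.
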